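(* Let $\langle-,-\rangle$ be a cyclic form on $C$. Then $\langle\mu(v_1,\dots,v_n),\mu(w_1,\dots,w_l)\rangle=0$ unless $\mathrm{Span}\{v_1,\dots,v_n,w_1,\dots,w_l\}=V$.
   Context: $k$ is a field of characteristic zero, $V$ a $k$-vector space of dimension $m\ge1$ in degree $0$, $A=\mathrm{Sym}(V)$, and $C=A^{\textup{!`}}$ the exterior coalgebra on $sV$ with elements $\mu(v_1,\dots,v_n)=sv_1\wedge\cdots\wedge sv_n$ (the vectors in each such expression taken linearly independent; $\mu()=e$ is the counit element), and coproduct $\triangle\mu(v_1,\dots,v_n)=\sum_{p=0}^n\sum_{\sigma\in Sh_{p,n-p}}\mathrm{sgn}(\sigma)\mu(v_{\sigma(1)},\dots,v_{\sigma(p)})\otimes\mu(v_{\sigma(p+1)},\dots,v_{\sigma(n)})$. A symmetric bilinear form of degree $-d$ on $C$ is $\langle-,-\rangle:C\otimes C\to k[d]$ with $\langle a,b\rangle=(-1)^{|a||b|}\langle b,a\rangle$; it is cyclic if $\sum\langle a,b^2\rangle b^1=\sum\langle a^1,b\rangle a^2$ for all $a,b$, with $\triangle(a)=\sum a^1\otimes a^2$, $\triangle(b)=\sum b^1\otimes b^2$. *)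

From mathcomp Require Import all_boot all_order all_algebra.
Set Implicit Arguments. Unset Strict Implicit. Unset Printing Implicit Defensive.
Import GRing.Theory.
Local Open Scope ring_scope.

(* V = k^m with its standard basis e_0,...,e_{m-1}.  The exterior coalgebra
   C = Lambda(sV) is encoded by its coordinates in the basis
   e_S = s e_{s_1} /\ ... /\ s e_{s_p}  (S = {s_1 < ... < s_p} a subset of 'I_m);
   C (x) C is encoded by coordinates in the basis e_S (x) e_T. *)
Section ExtCoalg.
Variables (k : fieldType) (m : nat).

Notation ext := {ffun {set 'I_m} -> k}.
Notation ext2 := {ffun {set 'I_m} * {set 'I_m} -> k}.

Definition ebasis (S : {set 'I_m}) : ext := [ffun T => (T == S)%:R].

Definition homog (p : nat) (a : ext) : Prop := forall S : {set 'I_m}, #|S| != p -> a S = 0.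

Definition shuffle_sign (T U : {set 'I_m}) : k :=
  (-1) ^+ #|[set pr : 'I_m * 'I_m | (pr.1 \in T) && (pr.2 \in U) && (pr.2 < pr.1)%N]|.

(* coproduct: Delta e_S = sum_{T subset S} sgn(T, S\T) e_T (x) e_{S\T}, extended linearly *)
Definition coproduct (a : ext) : ext2 :=
  [ffun pr : {set 'I_m} * {set 'I_m} => if [disjoint pr.1 & pr.2]
              then shuffle_sign pr.1 pr.2 * a (pr.1 :|: pr.2) else 0].

(* mu(v_1,...,v_n) = s v_1 /\ ... /\ s v_n, the v_i being the rows of Vs,
   expanded multilinearly: sum over f of (prod_i v_i(f i)) e_{f 0} /\ ... /\ e_{f(n-1)},
   where e_{f 0} /\ ... /\ e_{f (n-1)} = 0 if f is not injective and
   (-1)^(inversions of f) e_{image f} otherwise. *)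
Definition inversions n (f : {ffun 'I_n -> 'I_m}) : nat :=
  #|[set pr : 'I_n * 'I_n | (pr.1 < pr.2)%N && (f pr.2 < f pr.1)%N]|.

Definition mu n (Vs : 'M[k]_(n, m)) : ext :=
  [ffun S => \sum_(f : {ffun 'I_n -> 'I_m} | injectiveb f && (f @: setT == S))
               (-1) ^+ inversions f * \prod_(i < n) Vs i (f i)].

Definition pairing (B : {set 'I_m} -> {set 'I_m} -> k) (a b : ext) : k :=
  \sum_(S : {set 'I_m}) \sum_(T : {set 'I_m}) a S * b T * B S T.

(* symmetric bilinear form of degree -d which is cyclic:
   sum <a, b^2> b^1 = sum <a^1, b> a^2  (coordinate X of both sides) *)
Definition is_cyclic_form (d : int) (B : {set 'I_m} -> {set 'I_m} -> k) : Prop :=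
  [/\ (forall (p q : nat) (a b : ext), homog p a -> homog q b ->
         pairing B a b = (-1) ^+ (p * q) * pairing B b a),
      (forall (p q : nat) (a b : ext), homog p a -> homog q b ->
         ((p + q)%N)%:Z != d -> pairing B a b = 0)
    & (forall (a b : ext) (X : {set 'I_m}),
         \sum_(U : {set 'I_m}) coproduct b (X, U) * pairing B a (ebasis U)
         = \sum_(T : {set 'I_m}) coproduct a (T, X) * pairing B (ebasis T) b)].

End ExtCoalg.

From mathcomp Require Import all_boot all_order all_algebra ring.
Import GRing.Theory.
Local Open Scope ring_scope.
Set Implicit Arguments. Unset Strict Implicit. Unset Printing Implicit Defensive.

(* If the v_i and w_j do not span V, choose a linear form phi vanishing on all
   of them and a basis vector e with phi e <> 0.  Cyclicity of the form says
   exactly that the contraction i_phi (the map dual to splitting off one tensor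
   factor of the coproduct) satisfies <a, i_phi b> = sum_T +-(i_phi a)_T <e_T, b>.
   Now i_phi mu(v) = 0, while i_phi is an antiderivation, so
   i_phi (e /\ mu(w)) = phi(e) mu(w) - e /\ i_phi mu(w) = phi(e) mu(w).  Hence
   phi(e) <mu(v), mu(w)> = <mu(v), i_phi (e /\ mu(w))> = 0. *)

Lemma card_set_sum (T : finType) (P : pred T) : #|[set x | P x]| = (\sum_x P x)%N.
Proof. by rewrite -sum1dep_card big_mkcond; apply: eq_bigr => x _; case: (P x). Qed.

Lemma card_set_pairs (T : finType) (P : T -> T -> bool) :
  #|[set pr : T * T | P pr.1 pr.2]| = (\sum_a \sum_b P a b)%N.
Proof. by rewrite card_set_sum -(pair_bigA _ (fun a b => nat_of_bool (P a b))). Qed.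

Lemma injectiveb_card_imset (aT rT : finType) (f : aT -> rT) :
  injectiveb f = (#|f @: setT| == #|aT|).
Proof.
apply/injectiveP/idP => [f_inj|]; first by rewrite card_imset // cardsT.
by rewrite -cardsT => /imset_injP f_inj x y; apply: f_inj; rewrite inE.
Qed.

Lemma not_row_full_annihilator (k : fieldType) (p m : nat) (A : 'M[k]_(p, m)) :
  ~~ row_full A ->
  exists2 phi : 'I_m -> k, exists j, phi j != 0 & forall i, \sum_j phi j * A i j = 0.
Proof.
rewrite -cokermx_eq0 => /matrix0Pn [j [c coker_jc]].
exists (fun j => cokermx A j c); first by exists j.
move=> i; have := congr1 (fun M : 'M_(p, m) => M i c) (mulmx_coker A).
by rewrite !mxE => coker_i; rewrite -[RHS]coker_i; apply: eq_bigr => j' _; rewrite mulrC.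
Qed.

Section Contraction.
Variables (k : fieldType) (m : nat).
Notation ext := {ffun {set 'I_m} -> k}.

Lemma signr_sqr (c : nat) : (-1) ^+ c * (-1) ^+ c = 1 :> k.
Proof. by rewrite -expr2 sqrr_sign. Qed.

Lemma signrDK (x c : nat) : (-1) ^+ (x + c) * (-1) ^+ c = (-1) ^+ x :> k.
Proof. by rewrite exprD -mulrA signr_sqr mulr1. Qed.

(* e_i /\ e_S = (-1)^(nbelow S i) e_{i |: S} for i \notin S. *)
Definition nbelow (S : {set 'I_m}) (i : 'I_m) : nat := \sum_(s in S) (s < i)%N.

Lemma nbelow_setU1 (U : {set 'I_m}) i j :
  i \notin U -> nbelow (i |: U) j = ((i < j) + nbelow U j)%N.
Proof. by move=> iU; rewrite /nbelow big_setU1. Qed.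

Lemma nbelow_setD1 (U : {set 'I_m}) i j :
  j \in U -> nbelow U i = ((j < i) + nbelow (U :\ j) i)%N.
Proof. by move=> jU; rewrite /nbelow (big_setD1 j). Qed.

Definition contract (phi : 'I_m -> k) (x : ext) : ext :=
  [ffun U : {set 'I_m} => \sum_(i | i \notin U) phi i * (-1) ^+ nbelow U i * x (i |: U)].

Definition wedge (e : 'I_m -> k) (x : ext) : ext :=
  [ffun S : {set 'I_m} => \sum_(i in S) e i * (-1) ^+ nbelow S i * x (S :\ i)].

Lemma coproduct_set1l (b : ext) i U :
  coproduct b ([set i], U) = if i \in U then 0 else (-1) ^+ nbelow U i * b (i |: U).
Proof.
rewrite ffunE /= disjoints1; case: (i \in U) => //=; congr (_ * _).
rewrite /shuffle_sign; congr (_ ^+ _).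
rewrite (card_set_pairs (fun a b => (a \in [set i]) && (b \in U) && (b < a)%N)).
rewrite (bigD1 i) //= [X in (_ + X)%N]big1 ?addn0 => [|a ai]; last first.
  by apply: big1 => b0 _; rewrite in_set1 (negbTE ai).
rewrite /nbelow [RHS]big_mkcond /=; apply: eq_bigr => s _.
by rewrite in_set1 eqxx /=; case: (s \in U).
Qed.

Lemma coproduct_set1r (a : ext) i T :
  coproduct a (T, [set i]) =
  if i \in T then 0 else (-1) ^+ #|T| * ((-1) ^+ nbelow T i * a (i |: T)).
Proof.
rewrite ffunE /= disjoint_sym disjoints1; case: (boolP (i \in T)) => //= iT.
rewrite setUC mulrA; congr (_ * _); rewrite /shuffle_sign.
have -> : #|[set pr : 'I_m * 'I_m | (pr.1 \in T) && (pr.2 \in [set i]) && (pr.2 < pr.1)%N]|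
          = (\sum_(t in T) (i < t)%N)%N.
  rewrite (card_set_pairs (fun a b => (a \in T) && (b \in [set i]) && (b < a)%N)).
  rewrite [RHS]big_mkcond /=; apply: eq_bigr => t _.
  rewrite (bigD1 i) //= big1 ?addn0 => [|b0 b0i]; last by rewrite in_set1 (negbTE b0i) andbF.
  by rewrite in_set1 eqxx andbT; case: (t \in T).
have <- : ((\sum_(t in T) (i < t)%N) + nbelow T i)%N = #|T|.
  rewrite /nbelow -big_split /= -sum1_card; apply: eq_bigr => t tT.
  have ti : t != i by apply: contraNneq iT => <-.
  by case: ltngtP => // /val_inj eq_ti; rewrite eq_ti eqxx in ti.
by rewrite signrDK.
Qed.

Lemma contract_coproduct phi (x : ext) U :
  contract phi x U = \sum_i phi i * coproduct x ([set i], U).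
Proof.
rewrite ffunE [RHS](bigID (fun i => i \in U)) /=.
rewrite [X in _ = X + _]big1 ?add0r => [|i iU]; last by rewrite coproduct_set1l iU mulr0.
by apply: eq_bigr => i iU; rewrite coproduct_set1l (negbTE iU) mulrA.
Qed.

Lemma sum_coproduct_set1r phi (a : ext) T :
  \sum_i phi i * coproduct a (T, [set i]) = (-1) ^+ #|T| * contract phi a T.
Proof.
rewrite ffunE mulr_sumr [LHS](bigID (fun i => i \in T)) /=.
rewrite [X in X + _ = _]big1 ?add0r => [|i iT]; last by rewrite coproduct_set1r iT mulr0.
by apply: eq_bigr => i iT; rewrite coproduct_set1r (negbTE iT); ring.
Qed.

Lemma pairing_ebasisr B (a : ext) U : pairing B a (ebasis k U) = \sum_S a S * B S U.
Proof.
rewrite /pairing; apply: eq_bigr => S _.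
rewrite (bigD1 U) //= big1 => [|T TU]; first by rewrite !ffunE eqxx addr0 mulr1.
by rewrite !ffunE (negbTE TU) mulr0 mul0r.
Qed.

Lemma pairing_sum_ebasisr B (a b : ext) :
  pairing B a b = \sum_U b U * pairing B a (ebasis k U).
Proof.
rewrite [LHS]/pairing exchange_big; apply: eq_bigr => U _.
rewrite pairing_ebasisr mulr_sumr; apply: eq_bigr => S _; ring.
Qed.

Lemma pairing_scaler B (a b b' : ext) c :
  (forall U, b U = c * b' U) -> pairing B a b = c * pairing B a b'.
Proof.
move=> bE; rewrite /pairing mulr_sumr; apply: eq_bigr => S _.
by rewrite mulr_sumr; apply: eq_bigr => T _; rewrite bE; ring.
Qed.

Lemma pairing_contractr d B phi (a b : ext) : is_cyclic_form d B ->
  pairing B a (contract phi b) =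
  \sum_(T : {set 'I_m}) (-1) ^+ #|T| * contract phi a T * pairing B (ebasis k T) b.
Proof.
case=> _ _ cyclic; rewrite pairing_sum_ebasisr.
transitivity (\sum_i phi i * \sum_U coproduct b ([set i], U) * pairing B a (ebasis k U)).
  under eq_bigr do rewrite contract_coproduct mulr_suml.
  rewrite exchange_big; apply: eq_bigr => i _; rewrite mulr_sumr.
  by apply: eq_bigr => U _; rewrite mulrA.
under eq_bigr do rewrite cyclic mulr_sumr.
rewrite exchange_big /=; apply: eq_bigr => T _.
by rewrite -sum_coproduct_set1r mulr_suml; apply: eq_bigr => i _; rewrite mulrA.
Qed.

Lemma contract_wedge phi e (x : ext) U :
  contract phi (wedge e x) U = (\sum_i phi i * e i) * x U - wedge e (contract phi x) U.
Proof.
pose D1 := \sum_(i | i \notin U) \sum_(j in U) phi i * (-1) ^+ nbelow U i *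
             (e j * (-1) ^+ nbelow (i |: U) j * x ((i |: U) :\ j)).
pose D2 := \sum_(j in U) \sum_(i | i \notin U) e j * (-1) ^+ nbelow U j *
             (phi i * (-1) ^+ nbelow (U :\ j) i * x (i |: (U :\ j))).
have contractE : contract phi (wedge e x) U = \sum_(i | i \notin U) phi i * e i * x U + D1.
  rewrite /D1 -big_split /= ffunE; apply: eq_bigr => i iU.
  rewrite ffunE big_setU1 //= mulrDr -mulr_sumr; congr (_ + _).
  rewrite nbelow_setU1 // setU1K //= ltnn add0n.
  by rewrite -[RHS]mulr1 -[1 in RHS](signr_sqr (nbelow U i)); ring.
have wedgeE : wedge e (contract phi x) U = \sum_(j in U) phi j * e j * x U + D2.
  rewrite /D2 -big_split /= ffunE; apply: eq_bigr => j jU.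
  rewrite ffunE (bigD1 j) /=; last by rewrite !inE eqxx.
  rewrite mulrDr; congr (_ + _).
    rewrite [in LHS](nbelow_setD1 j jU) ltnn add0n setD1K //.
    by rewrite -[RHS]mulr1 -[1 in RHS](signr_sqr (nbelow (U :\ j) j)); ring.
  rewrite mulr_sumr; apply: eq_bigl => i; rewrite !inE.
  by case: (eqVneq i j) => [->|]; rewrite ?jU //= andbT.
(* the mixed terms cancel: e_i and e_j are swapped, which costs one sign *)
have D1E : D1 = - D2.
  rewrite /D2 exchange_big /= -sumrN; apply: eq_bigr => i iU.
  rewrite -sumrN; apply: eq_bigr => j jU.
  have ij : i != j by apply: contraNneq iU => ->.
  have -> : (i |: U) :\ j = i |: (U :\ j).
    by apply/setP => t; rewrite !inE; case: (eqVneq t i) => [->|] //=; rewrite ij.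
  rewrite nbelow_setU1 // (nbelow_setD1 i jU) !exprD.
  case: ltngtP => [_|_|/val_inj eq_ij]; last by rewrite eq_ij eqxx in ij.
    by rewrite /= expr1 expr0; ring.
  by rewrite /= expr1 expr0; ring.
rewrite contractE wedgeE D1E mulr_suml [X in _ = X - _](bigID (fun i => i \in U)) /=.
ring.
Qed.

(* mu Vs is convertible to mu_fun (fun i j => Vs i j). *)
Definition mu_fun n (v : 'I_n -> 'I_m -> k) : ext :=
  [ffun S : {set 'I_m} => \sum_(f : {ffun 'I_n -> 'I_m} | injectiveb f && (f @: setT == S))
               (-1) ^+ inversions f * \prod_(i < n) v i (f i)].

Lemma mu_fun0 (v : 'I_0 -> 'I_m -> k) S : S != set0 -> mu_fun v S = 0.
Proof.
move=> S_neq0; rewrite ffunE big1 // => f /andP[_ /eqP fS].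
have : f @: setT = set0 by apply/setP => x; rewrite inE; apply/imsetP => -[[]].
by rewrite fS => S0; rewrite S0 eqxx in S_neq0.
Qed.

Definition cons_ffun n (p : 'I_m * {ffun 'I_n -> 'I_m}) : {ffun 'I_n.+1 -> 'I_m} :=
  [ffun j => if unlift ord0 j is Some j' then p.2 j' else p.1].

Lemma cons_ffun0 n p : @cons_ffun n p ord0 = p.1.
Proof. by rewrite ffunE unlift_none. Qed.

Lemma cons_ffunS n p j : @cons_ffun n p (lift ord0 j) = p.2 j.
Proof. by rewrite ffunE liftK. Qed.

Lemma cons_ffun_bij n : bijective (@cons_ffun n).
Proof.
exists (fun f : {ffun 'I_n.+1 -> 'I_m} => (f ord0, [ffun j => f (lift ord0 j)])).
  move=> [i g] /=; rewrite cons_ffun0; congr (_, _).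
  by apply/ffunP => j; rewrite ffunE cons_ffunS.
move=> f; apply/ffunP => j; rewrite ffunE /=.
by case: unliftP => [j' ->|->]; rewrite ?ffunE.
Qed.

Lemma imset_cons_ffun n p : @cons_ffun n p @: setT = p.1 |: (p.2 @: setT).
Proof.
apply/setP => x; rewrite !inE; apply/imsetP/orP.
  case=> j _ ->; case: (unliftP ord0 j) => [j' ->|->]; last by left; rewrite cons_ffun0.
  by right; rewrite cons_ffunS; apply/imsetP; exists j'.
case=> [/eqP ->|/imsetP [j _ ->]]; first by exists ord0; rewrite ?cons_ffun0.
by exists (lift ord0 j); rewrite ?cons_ffunS.
Qed.

Lemma inversions_cons_ffun n i g :
  inversions (@cons_ffun n (i, g)) = (#|[set j | g j < i]| + inversions g)%N.
Proof.
rewrite /inversions (card_set_pairs (fun a b : 'I_n.+1 =>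
  (a < b)%N && (cons_ffun (i, g) b < cons_ffun (i, g) a)%N)).
rewrite (card_set_pairs (fun a b : 'I_n => (a < b)%N && (g b < g a)%N)) card_set_sum.
rewrite big_ord_recl big_ord_recl /= add0n; congr (_ + _)%N.
  by apply: eq_bigr => b _; rewrite cons_ffunS cons_ffun0.
apply: eq_bigr => a _; rewrite big_ord_recl /=; apply: eq_bigr => b _.
by rewrite !cons_ffunS /bump !leq0n !add1n ltnS.
Qed.

Lemma injective_cons_ffun_imset n i (g : {ffun 'I_n -> 'I_m}) S :
  injectiveb (cons_ffun (i, g)) && (cons_ffun (i, g) @: setT == S)
  = [&& i \in S, injectiveb g & g @: setT == S :\ i].
Proof.
rewrite !injectiveb_card_imset !card_ord imset_cons_ffun /=.
have : (#|g @: setT| <= n)%N by rewrite (leq_trans (leq_imset_card _ _)) // cardsT card_ord.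
move: (g @: setT) => G G_le_n; case: (boolP (i \in G)) => iG.
  rewrite cardsU1 iG /= add0n (ltn_eqF (leq_ltn_trans G_le_n (ltnSn n))) /=.
  case: (i \in S) => //=; apply/esym/negbTE; apply/negP => /andP[_ /eqP GS].
  by rewrite GS setD11 in iG.
rewrite cardsU1 iG add1n eqSS.
have -> : (i |: G == S) = (i \in S) && (G == S :\ i).
  apply/eqP/andP => [<-|[iS /eqP ->]]; last by rewrite setD1K.
  by rewrite setU11 setU1K.
by case: (i \in S); case: (#|G| == n).
Qed.

Lemma nbelow_imset n i (g : {ffun 'I_n -> 'I_m}) (S : {set 'I_m}) :
  i \in S -> injectiveb g -> g @: setT = S :\ i ->
  nbelow S i = #|[set j | (g j < i)%N]|.
Proof.
move=> iS /injectiveP g_inj gS.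
rewrite /nbelow (big_setD1 i iS) ltnn /= -gS big_imset /=; last by move=> x y _ _; apply: g_inj.
by rewrite card_set_sum; apply: eq_bigl => j; rewrite inE.
Qed.

Lemma mu_fun_cons n (v : 'I_n.+1 -> 'I_m -> k) :
  mu_fun v = wedge (v ord0) (mu_fun (fun i => v (lift ord0 i))).
Proof.
apply/ffunP => S; rewrite ffunE (reindex (@cons_ffun n)); last first.
  exact/onW_bij/cons_ffun_bij.
rewrite ffunE; under [RHS]eq_bigr do rewrite ffunE mulr_sumr.
rewrite pair_big_dep /=; apply: eq_big => [[i g]|[i g]] /=.
  exact: injective_cons_ffun_imset.
rewrite injective_cons_ffun_imset => /and3P[iS g_inj /eqP gS].
rewrite inversions_cons_ffun big_ord_recl cons_ffun0 (nbelow_imset iS g_inj gS) exprD.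
under [in LHS]eq_bigr do rewrite cons_ffunS.
ring.
Qed.

Lemma contract_mu_fun_eq0 phi n (v : 'I_n -> 'I_m -> k) :
  (forall i, \sum_j phi j * v i j = 0) -> contract phi (mu_fun v) = 0.
Proof.
elim: n v => [|n IHn] v phi_v; apply/ffunP => U; rewrite [RHS]ffunE.
  rewrite ffunE big1 // => i iU; rewrite mu_fun0 ?mulr0 //.
  by apply/set0Pn; exists i; rewrite setU11.
rewrite mu_fun_cons contract_wedge phi_v mul0r IHn => [|i]; last exact: phi_v.
by rewrite ffunE big1 ?subr0 // => i _; rewrite ffunE mulr0.
Qed.

End Contraction.

Theorem corollary9p3 (k : fieldType) (m : nat) (d : int)
    (B : {set 'I_m} -> {set 'I_m} -> k)
    (n l : nat) (Vs : 'M[k]_(n, m)) (Ws : 'M[k]_(l, m)) :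
  [pchar k] =i pred0 -> (0 < m)%N ->
  is_cyclic_form d B ->
  row_free Vs -> row_free Ws ->
  pairing B (mu Vs) (mu Ws) != 0 ->
  (1%:M <= col_mx Vs Ws)%MS.
Proof.
move=> _ _ cyclic _ _; rewrite sub1mx; apply: contraNT.
case/not_row_full_annihilator => phi [j0 phi_j0] phi_VW.
have phi_V i : \sum_j phi j * Vs i j = 0.
  by rewrite -[RHS](phi_VW (lshift l i)); apply: eq_bigr => j _; rewrite col_mxEu.
have phi_W i : \sum_j phi j * Ws i j = 0.
  by rewrite -[RHS](phi_VW (rshift n i)); apply: eq_bigr => j _; rewrite col_mxEd.
pose e j : k := (j == j0)%:R.
have phi_e : \sum_j phi j * e j = phi j0.
  by rewrite (bigD1 j0) //= big1 => [|j /negbTE j_j0]; rewrite /e ?eqxx ?j_j0 ?mulr0 ?mulr1 ?addr0.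
have contract_eW U : contract phi (wedge e (mu Ws)) U = phi j0 * mu Ws U.
  rewrite contract_wedge phi_e (contract_mu_fun_eq0 phi_W) [wedge _ _ _]ffunE.
  by rewrite big1 ?subr0 // => i _; rewrite ffunE mulr0.
suff : phi j0 * pairing B (mu Vs) (mu Ws) == 0 by rewrite mulf_eq0 (negbTE phi_j0).
rewrite -(pairing_scaler _ _ contract_eW).
rewrite (pairing_contractr _ _ _ cyclic) (contract_mu_fun_eq0 phi_V).
by apply/eqP/big1 => T _; rewrite ffunE mulr0 mul0r.
Qed.
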